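(* Let $\ell\ge1$ and let $V=v_\ell v_\ell\,v_{\ell-1}v_{\ell-1}\cdots v_2v_2\,v_1v_1=\prod_{j=\ell,\dots,2,1}(c_1x^jy^jc_2)^2$, where $v_j=c_1x^jy^jc_2$. The only accepting computation $\varepsilon\,\|\,V\vdash^*\varepsilon\,\|\,\varepsilon$ of the queue automaton is the one that, for each $k$, matches every symbol of one occurrence of $v_k$ in $V$ with the corresponding symbol of the other occurrence of $v_k$ in $V$.
   Context: Queue automaton: a configuration is written $Q\,\|\,x$ ($Q$ = queue contents, $x$ = remaining input); a step from $Q\,\|\,\sigma x$ ($\sigma$ a symbol) goes either to $Q\sigma\,\|\,x$ (push the input symbol) or, if $Q=\sigma Q'$, to $Q'\,\|\,x$ (the input symbol is matched against the leftmost queue symbol, which is popped; that queue symbol was pushed from an earlier input position and the two occurrences are said to be matched). $\vdash^*$ is zero or more steps; $\varepsilon$ is the empty string; an accepting computation of $w$ is a computation $\varepsilon\,\|\,w\vdash^*\varepsilon\,\|\,\varepsilon$. Here $c_1,c_2,x,y$ are four distinct symbols and $u^j$ denotes $j$ concatenated copies of $u$. *)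

From mathcomp Require Import all_boot.
Set Implicit Arguments. Unset Strict Implicit. Unset Printing Implicit Defensive.

(* A configuration  Q || x  is the pair (Q, x) : queue contents, remaining input.
   The queue is read (popped) on the left and written (pushed) on the right. *)
Definition config (T : eqType) := (seq T * seq T)%type.

(* One step:  Q || s x  |-  Q s || x   (push)
              s Q' || s x  |-  Q' || x  (match/pop). *)
Definition qstep (T : eqType) (c c' : config T) : bool :=
  match c.2 with
  | [::] => false
  | s :: x => (c'.2 == x) && ((c'.1 == rcons c.1 s) || (c.1 == s :: c'.1))
  end.

(* A computation from c0 is the list of successive configurations after c0
   (zero or more steps); it is accepting for w if it starts at (eps, w) and
   ends in (eps, eps). *)
Definition accepting_computation (T : eqType) (w : seq T) (cs : seq (config T)) : bool :=
  path (@qstep T) ([::], w) cs && (last ([::], w) cs == ([::], [::])).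

(* Deterministic execution of a choice sequence (true = push the input symbol,
   false = pop the leftmost queue symbol, matching it with the input symbol). *)
Fixpoint exec (T : eqType) (Q w : seq T) (ch : seq bool) : seq (config T) :=
  match ch, w with
  | b :: ch', s :: w' =>
      let Q' := if b then rcons Q s else behead Q in
      (Q', w') :: exec Q' w' ch'
  | _, _ => [::]
  end.

Definition vj (T : eqType) (c1 c2 x y : T) (j : nat) : seq T :=
  c1 :: nseq j x ++ nseq j y ++ [:: c2].

Definition Vword (T : eqType) (c1 c2 x y : T) (l : nat) : seq T :=
  flatten [seq vj c1 c2 x y j ++ vj c1 c2 x y j | j <- rev (iota 1 l)].

(* The intended computation: for each block v_k v_k, push the symbols of the
   first occurrence of v_k, then pop them while reading the second occurrence;
   thus each symbol of the first v_k is matched with the corresponding symbol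
   of the second v_k. *)
Definition intended_choices (T : eqType) (c1 c2 x y : T) (l : nat) : seq bool :=
  flatten [seq nseq (size (vj c1 c2 x y j)) true ++ nseq (size (vj c1 c2 x y j)) false
          | j <- rev (iota 1 l)].

Definition intended_computation (T : eqType) (c1 c2 x y : T) (l : nat) : seq (config T) :=
  exec [::] (Vword c1 c2 x y l) (intended_choices c1 c2 x y l).

(* A computation on V is forced step by step once we know which queues can still
   lead to acceptance. Reading v_j v_j from the empty queue, the first v_j must be
   pushed (the queue is empty or starts with c1, which does not occur again in
   v_j), and the second v_j must then be popped: pushing one of its letters
   instead leaves a queue that contains x^j or y^j, or starts with y or c2. Such
   a queue cannot be emptied by the rest v_(j-1) v_(j-1) ... v_1 v_1 of the
   input: by induction on the number of remaining blocks, every queue from which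
   they can be read to the empty queue starts with neither y nor c2, has no
   factor x^j or y^j, and contains every letter an even number of times. *)

From mathcomp Require Import all_boot zify.
Set Implicit Arguments. Unset Strict Implicit. Unset Printing Implicit Defensive.

Section Words.
Variable T : eqType.
Implicit Types (a b : T) (u v w p s Q : seq T).

Lemma cat_eq_cat_cases Q s p Q' : Q ++ s = p ++ Q' ->
  (exists Q0, Q = p ++ Q0 /\ Q' = Q0 ++ s) \/
  (exists s1, [/\ s1 != [::], p = Q ++ s1 & s = s1 ++ Q']).
Proof.
elim: Q p => [|a Q IH] [|b p] //=.
- by move=> ->; left; exists [::].
- by move=> ->; right; exists (b :: p).
- by move=> <-; left; exists (a :: Q).
case=> <- /IH [[Q0 [-> ->]]|[s1 [? -> ->]]]; first by left; exists Q0.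
by right; exists s1.
Qed.

Lemma nseq_cat_cancel n i a u v : i <= n -> nseq n a ++ u = nseq i a ++ v ->
  v = nseq (n - i) a ++ u.
Proof.
elim: i n => [|i IH] n; first by rewrite subn0 => _ ->.
case: n => [|n] //= lt_in [/(IH _ lt_in) ->].
by rewrite subSS.
Qed.

Lemma cat_cons_first b u1 v1 u2 v2 : b \notin u1 -> b \notin u2 ->
  u1 ++ b :: v1 = u2 ++ b :: v2 -> u1 = u2 /\ v1 = v2.
Proof.
elim: u1 u2 => [|a u1 IH] [|c u2] /=; first by move=> _ _ [->].
- by move=> _; rewrite inE => /norP [/eqP bc _] [/bc].
- by rewrite inE => /norP [/eqP ba _] _ [/esym/ba].
rewrite !inE => /norP [_ b_u1] /norP [_ b_u2] [-> /IH].
by case/(_ b_u1 b_u2) => -> ->.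
Qed.

Lemma infix_cat_cons_notin s u b v : b \notin s ->
  infix s (u ++ b :: v) -> infix s u || infix s v.
Proof.
move=> b_s /infixP [w1 [w2 /cat_eq_cat_cases [[Q0 [-> e]]|[s1 [s1n0 _ e]]]]].
- case/cat_eq_cat_cases: e => [[[|c r] [es /=]]|[r [_ -> _]]].
  + by rewrite es cats0 suffix_infix.
  + by case=> ebc _; move: b_s; rewrite es ebc mem_cat inE eqxx orbT.
  + by rewrite infix_infix.
- case: s1 s1n0 e => [|c s1] //= _ [_ ->].
  by rewrite infix_infix orbT.
Qed.

Lemma nseq_cat_eq_cat_cons n b R u1 a u' : nseq n b ++ R = u1 ++ a :: u' ->
  (exists2 i, i < n & a = b /\ u' = nseq i b ++ R) \/
  (exists2 u2, u1 = nseq n b ++ u2 & R = u2 ++ a :: u').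
Proof.
elim: n u1 => [|n IH] u1 /=; first by move=> ->; right; exists u1.
case: u1 => [|c u1] /= [<-]; first by move=> <-; left; exists n.
case/IH=> [[i lt_in [-> ->]]|[u2 -> ->]]; first by left; exists i; rewrite // ltnS ltnW.
by right; exists u2.
Qed.

Lemma infix_nseq_count n a w : infix (nseq n a) w -> n <= count_mem a w.
Proof. by case/infixP=> u [v ->]; rewrite !count_cat count_nseq /= eqxx; lia. Qed.

Lemma count_lt_infix_nseq n a w : count_mem a w < n -> ~~ infix (nseq n a) w.
Proof. by apply: contraTN => /infix_nseq_count; rewrite -leqNgt. Qed.

Lemma infix_nseq_cat_cons n a u b v : b != a ->
  infix (nseq n a) (u ++ b :: v) -> infix (nseq n a) u || infix (nseq n a) v.
Proof. by move=> ba; apply: infix_cat_cons_notin; rewrite mem_nseq (negbTE ba) andbF. Qed.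

Lemma infix_nseq_cat n a u v : (if v is b :: _ then b != a else true) ->
  infix (nseq n a) (u ++ v) -> infix (nseq n a) u || infix (nseq n a) v.
Proof.
case: v => [|b v]; first by rewrite cats0 => _ ->.
move=> ba /(infix_nseq_cat_cons ba) /orP [-> //| run].
by rewrite (infix_trans run (infix_cons _ _)) orbT.
Qed.

Lemma infix_nseq_ncons n k a b w : b != a ->
  infix (nseq n.+1 a) (nseq k b ++ w) -> infix (nseq n.+1 a) w.
Proof.
move=> ba; elim: k => [|k IH] // run.
by apply: IH; move: (infix_nseq_cat_cons (u := [::]) ba run); rewrite infixs0.
Qed.

End Words.

Section Reading.
Variable T : eqType.
Implicit Types (a : T) (u v w p s Q : seq T).

Fixpoint reads Q w Q' : Prop :=
  if w is a :: w' then reads (rcons Q a) w' Q' \/ exists2 Q1, Q = a :: Q1 & reads Q1 w' Q'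
  else Q' = Q.

Lemma reads_cat Q w1 w2 Q' :
  reads Q (w1 ++ w2) Q' -> exists2 Q1, reads Q w1 Q1 & reads Q1 w2 Q'.
Proof.
elim: w1 Q => [|a w1 IH] Q /=; first by exists Q.
case=> [/IH [Q1 r1 r2]|[Q2 -> /IH [Q1 r1 r2]]]; exists Q1 => //; first by left.
by right; exists Q2.
Qed.

Lemma path_reads Q w cs : path (@qstep T) (Q, w) cs ->
  last (Q, w) cs = ([::], [::]) -> reads Q w [::].
Proof.
elim: cs Q w => [|[Q2 w2] cs IH] Q w /=; first by move=> _ [-> ->].
case/andP=> + /IH {}IH /IH; rewrite /qstep /=.
case: w => [|a w] //= /andP [/eqP <- /orP [/eqP ->|/eqP ->]] r; first by left.
by right; exists Q2.
Qed.

Inductive shuffle : seq T -> seq T -> seq T -> Prop :=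
  | shuffle_nil : shuffle [::] [::] [::]
  | shuffle_pop a w p s : shuffle w p s -> shuffle (a :: w) (a :: p) s
  | shuffle_push a w p s : shuffle w p s -> shuffle (a :: w) p (a :: s).

Lemma shuffle_consE a w p s : shuffle (a :: w) p s ->
  (exists2 p', p = a :: p' & shuffle w p' s) \/ (exists2 s', s = a :: s' & shuffle w p s').
Proof.
by move=> sh; inversion sh as [|? ? p' ? sh'|? ? ? s' sh']; [left; exists p' | right; exists s'].
Qed.

Lemma reads_shuffle Q w Q' : reads Q w Q' ->
  exists p s, shuffle w p s /\ Q ++ s = p ++ Q'.
Proof.
elim: w Q => [|a w IH] Q /=.
  by move=> ->; exists [::], [::]; rewrite cats0; split=> //; constructor.
case=> [/IH [p [s [sh e]]]|[Q1 -> /IH [p [s [sh e]]]]].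
- by exists p, (a :: s); split; [constructor | rewrite -cat_rcons].
- by exists (a :: p), s; split; [constructor | rewrite /= e].
Qed.

Lemma shuffle_cat w1 w2 p s : shuffle (w1 ++ w2) p s ->
  exists p1 p2 s1 s2, [/\ p = p1 ++ p2, s = s1 ++ s2, shuffle w1 p1 s1 & shuffle w2 p2 s2].
Proof.
elim: w1 p s => [|a w1 IH] p s /= sh.
  by exists [::], p, [::], s; split=> //; constructor.
case/shuffle_consE: sh => [[p' ->]|[s' ->]] /IH [p1 [p2 [s1 [s2 [-> -> sh1 sh2]]]]].
- by exists (a :: p1), p2, s1, s2; split=> //; constructor.
- by exists p1, p2, (a :: s1), s2; split=> //; constructor.
Qed.

Lemma shuffle_nseq n a p s : shuffle (nseq n a) p s ->
  exists2 i, i <= n & p = nseq i a /\ s = nseq (n - i) a.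
Proof.
elim: n p s => [|n IH] p s /= sh; first by inversion sh; exists 0.
case/shuffle_consE: sh => [[p' ->]|[s' ->]] /IH [i le_in [-> ->]].
- by exists i.+1.
- by exists i; rewrite ?subSn ?leqW.
Qed.

Lemma shuffle_count a w p s : shuffle w p s -> count_mem a p + count_mem a s = count_mem a w.
Proof. by elim=> //= b w' p' s' _ <-; lia. Qed.

Lemma shuffle_size w p s : shuffle w p s -> size p + size s = size w.
Proof. by elim=> //= b w' p' s' _ <-; lia. Qed.

Lemma reads_pops_prefix Q w Q' : reads Q w Q' -> size w < size Q ->
  exists p s Q0, [/\ shuffle w p s, Q = p ++ Q0 & Q' = Q0 ++ s].
Proof.
move=> /reads_shuffle [p [s [sh e]]] lt_wQ.
case/cat_eq_cat_cases: e => [[Q0 [-> ->]]|[s1 [s1_neq0 ep _]]]; first by exists p, s, Q0.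
have := shuffle_size sh; move: (congr1 size ep) lt_wQ; rewrite size_cat.
by case: s1 s1_neq0 {ep} => //= *; lia.
Qed.

Lemma shuffle_even_count (z : T) w p s Q Q' : shuffle w p s -> Q ++ s = p ++ Q' ->
  ~~ odd (count_mem z w) -> ~~ odd (count_mem z Q') -> ~~ odd (count_mem z Q).
Proof.
move=> /(shuffle_count z) sh /(congr1 (count_mem z)); rewrite !count_cat => e.
have : count_mem z Q + (count_mem z s + count_mem z s) = count_mem z w + count_mem z Q'.
  by lia.
by move/(congr1 odd); rewrite !oddD addbb addbF => -> /negPf-> /negPf->.
Qed.

Lemma shuffle_nil_pop w s : shuffle w [::] s -> s = w.
Proof.
elim: w s => [|a w IH] s sh; first by inversion sh.
by case/shuffle_consE: sh => [[] //|[s' -> /IH ->]].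
Qed.

End Reading.

Section ForcedRuns.
Variable T : eqType.
Implicit Types (a : T) (u w Q : seq T) (K : seq T -> Prop) (ch : seq bool).

Definition step_queue Q a (push : bool) := if push then rcons Q a else behead Q.

Fixpoint final_queue Q w ch :=
  if (w, ch) is (a :: w', b :: ch') then final_queue (step_queue Q a b) w' ch' else Q.

(* [forced K Q w ch]: the choices [ch] (true = push) give a run on [w] from [Q],
   and at each step the only successor queue from which the rest of [w] can be
   read into a queue satisfying [K] is the chosen one. *)
Fixpoint forced K Q w ch : Prop :=
  match w, ch with
  | [::], [::] => True
  | a :: w', b :: ch' =>
     [/\ ~~ b -> Q = a :: behead Q,
         forall Q1 Q', Q1 = rcons Q a \/ Q = a :: Q1 -> reads Q1 w' Q' -> K Q' ->
           Q1 = step_queue Q a b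
       & forced K (step_queue Q a b) w' ch']
  | _, _ => False
  end.

Lemma forced_weaken K K' Q w ch :
  (forall Q', K Q' -> K' Q') -> forced K' Q w ch -> forced K Q w ch.
Proof.
move=> KK'; elim: w Q ch => [|a w IH] Q [|b ch] //= [pop_ok only next].
by split=> [//|Q1 Q' step r /KK'|]; [exact: only | exact: IH].
Qed.

Lemma forced_cat K Q w1 w2 ch1 ch2 :
  forced (fun Q1 => exists2 Q', reads Q1 w2 Q' & K Q') Q w1 ch1 ->
  forced K (final_queue Q w1 ch1) w2 ch2 -> forced K Q (w1 ++ w2) (ch1 ++ ch2).
Proof.
elim: w1 Q ch1 => [|a w1 IH] Q [|b ch1] //= [pop_ok only next] f2.
split=> [//|Q1 Q' step /reads_cat [Q2 r1 r2] KQ'|]; last exact: IH.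
by apply: only step r1 _; exists Q'.
Qed.

Lemma final_queue_cat Q w1 w2 ch1 ch2 : size ch1 = size w1 ->
  final_queue Q (w1 ++ w2) (ch1 ++ ch2) = final_queue (final_queue Q w1 ch1) w2 ch2.
Proof. by elim: w1 Q ch1 => [|a w1 IH] Q [|b ch1] //= [/IH]. Qed.

Lemma final_queue_push Q w : final_queue Q w (nseq (size w) true) = Q ++ w.
Proof. by elim: w Q => [|a w IH] Q /=; rewrite ?cats0 // IH cat_rcons. Qed.

Lemma final_queue_pop w : final_queue w w (nseq (size w) false) = [::].
Proof. by elim: w. Qed.

Lemma forced_push K c Q w : c \notin w -> (exists Q', Q = c :: Q') ->
  forced K Q w (nseq (size w) true).
Proof.
elim: w Q => [|a w IH] //= Q; rewrite inE => /norP [ca c_w] [Q' eQ].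
split=> // [Q1 Q'' [//|] | ]; first by rewrite eQ => -[eac]; rewrite eac eqxx in ca.
by apply: IH => //; exists (rcons Q' a); rewrite eQ.
Qed.

Lemma forced_pop K u :
  (forall u1 a u', u = u1 ++ a :: u' ->
     forall Q', reads (rcons (a :: u') a) u' Q' -> ~ K Q') ->
  forced K u u (nseq (size u) false).
Proof.
elim: u => [|a u IH] //= dead; split=> //.
- by move=> Q1 Q' [->|[<-]] // r KQ'; case: (dead [::] a u erefl _ r).
- by apply: IH => u1 b u' eu; apply: (dead (a :: u1)); rewrite eu.
Qed.

Lemma forced_exec K Q w ch : forced K Q w ch ->
  path (@qstep T) (Q, w) (exec Q w ch) /\
  last (Q, w) (exec Q w ch) = (final_queue Q w ch, [::]).
Proof.
elim: w Q ch => [|a w IH] Q [|b ch] //= [pop_ok _ /IH [-> ->]].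
rewrite andbT /qstep /= eqxx; case: b pop_ok => /= [_|pop_ok].
  by rewrite eqxx.
by rewrite -(pop_ok isT) !eqxx orbT.
Qed.

Lemma forced_accepting_exec Q w ch cs : forced (eq^~ [::]) Q w ch ->
  path (@qstep T) (Q, w) cs -> last (Q, w) cs = ([::], [::]) -> cs = exec Q w ch.
Proof.
elim: w Q ch cs => [|a w IH] Q [|b ch] // [|[Q1 w1] cs] //=.
case=> _ only next /andP [step p] e; move: step; rewrite /qstep /= => /andP [/eqP ew step].
subst w1; have eQ1 : Q1 = step_queue Q a b.
  by apply: (only _ _ _ (path_reads p e) erefl); case/orP: step => /eqP; [left | right].
by subst Q1; rewrite (IH _ _ _ next p e).
Qed.

End ForcedRuns.

Section VWord.
Variable T : eqType.
Variables c1 c2 x y : T.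
Hypotheses (h12 : c1 != c2) (h1x : c1 != x) (h1y : c1 != y)
  (h2x : c2 != x) (h2y : c2 != y) (hxy : x != y).
Implicit Types (u w p s Q : seq T).

Let h21 : c2 != c1 := contra_neq (@esym _ c2 c1) h12.
Let hx1 : x != c1 := contra_neq (@esym _ x c1) h1x.
Let hy1 : y != c1 := contra_neq (@esym _ y c1) h1y.
Let hx2 : x != c2 := contra_neq (@esym _ x c2) h2x.
Let hy2 : y != c2 := contra_neq (@esym _ y c2) h2y.
Let hyx : y != x := contra_neq (@esym _ y x) hxy.
Let letter_neqE := (negbTE h12, negbTE h1x, negbTE h1y, negbTE h2x, negbTE h2y,
  negbTE hxy, negbTE h21, negbTE hx1, negbTE hy1, negbTE hx2, negbTE hy2, negbTE hyx).

Definition head_ok Q := if Q is a :: _ then (a != y) && (a != c2) else true.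

(* [lia] gets very slow in the presence of the boolean hypotheses on letters. *)
Ltac nat_lia := repeat match goal with
  | H : prod _ _ |- _ => clear H
  | H : is_true (~~ _) |- _ => clear H
  | H : forall _ : T, _ |- _ => clear H
  | H : is_true (head_ok _) |- _ => clear H
  end; lia.

Ltac count_letters := rewrite ?count_cat ?count_nseq /= ?eqxx ?letter_neqE /=.

(* [cxyc e a b f] is c1^e x^a y^b c2^f, so that [vj c1 c2 x y n] is [cxyc 1 n n 1]. *)
Definition cxyc (e a b f : nat) := nseq e c1 ++ nseq a x ++ nseq b y ++ nseq f c2.

Local Notation v j := (vj c1 c2 x y j).

Lemma shuffle_cxyc e a b f p s : shuffle (cxyc e a b f) p s ->
  exists e' a' b' f', [/\ [&& e' <= e, a' <= a, b' <= b & f' <= f],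
    p = cxyc e' a' b' f' & s = cxyc (e - e') (a - a') (b - b') (f - f')].
Proof.
case/shuffle_cat=> [p1 [p' [s1 [s' [-> -> /shuffle_nseq [e' le_e [-> ->]]]]]]].
case/shuffle_cat=> [p2 [p'' [s2 [s'' [-> -> /shuffle_nseq [a' le_a [-> ->]]]]]]].
case/shuffle_cat=> [p3 [p4 [s3 [s4 [-> -> /shuffle_nseq [b' le_b [-> ->]]]]]]].
case/shuffle_nseq=> [f' le_f [-> ->]].
by exists e', a', b', f'; rewrite le_e le_a le_b le_f.
Qed.

Lemma count_c1_cxyc e a b f : count_mem c1 (cxyc e a b f) = e.
Proof. by rewrite /cxyc; count_letters; nat_lia. Qed.

Lemma infix_cxyc_x e a b f : infix (nseq a x) (cxyc e a b f).
Proof. exact: infix_infix. Qed.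

Lemma infix_cxyc_y e a b f : infix (nseq b y) (cxyc e a b f).
Proof. by rewrite /cxyc catA infix_infix. Qed.

(* Necessary conditions for [Vword c1 c2 x y n] to be readable from queue [Q] to
   the empty queue. *)
Definition viable n Q := [/\ head_ok Q, ~~ infix (nseq n.+1 x) Q,
  ~~ infix (nseq n.+1 y) Q & forall z, ~~ odd (count_mem z Q)].

Lemma viable_nil n : viable n [::].
Proof. by split; rewrite ?infixs0. Qed.

Section BlockInvariant.
Variables (n e1 a1 b1 f1 e2 a2 b2 f2 : nat) (Q Q' : seq T).
Hypotheses (le_e1 : e1 <= 1) (le_a1 : a1 <= n.+1) (le_b1 : b1 <= n.+1) (le_f1 : f1 <= 1)
  (le_e2 : e2 <= 1) (le_a2 : a2 <= n.+1) (le_b2 : b2 <= n.+1) (le_f2 : f2 <= 1).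
Hypotheses (head_Q' : head_ok Q') (xrun_Q' : ~~ infix (nseq n.+1 x) Q')
  (yrun_Q' : ~~ infix (nseq n.+1 y) Q') (even_Q' : forall z, ~~ odd (count_mem z Q')).

(* Reading [v n.+1 ++ v n.+1] from [Q] to [Q'] pops the letters [p] and pushes
   the letters [s], so that [Q ++ s = p ++ Q']. *)
Let p := cxyc e1 a1 b1 f1 ++ cxyc e2 a2 b2 f2.
Let s := cxyc (1 - e1) (n.+1 - a1) (n.+1 - b1) (1 - f1) ++
  cxyc (1 - e2) (n.+1 - a2) (n.+1 - b2) (1 - f2).

Section QueueNotEmptied.
Variable Q0 : seq T.
Hypotheses (eQ : Q = p ++ Q0) (eQ' : Q' = Q0 ++ s).

Lemma keep_pops_pos : [/\ 0 < a1, 0 < a2, 0 < b1 & 0 < b2].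
Proof.
have pos z k : ~~ infix (nseq n.+1 z) Q' -> infix (nseq (n.+1 - k) z) s -> 0 < k.
  move=> no_run run; rewrite lt0n; apply/eqP=> k0; move: run; rewrite k0 subn0.
  by apply/negP; apply: contra no_run => /infix_trans; apply; rewrite eQ' suffix_infix.
split; [apply: (pos x) | apply: (pos x) | apply: (pos y) | apply: (pos y)] => //.
- exact/infix_catr/infix_cxyc_x.
- exact/infix_catl/infix_cxyc_x.
- exact/infix_catr/infix_cxyc_y.
- exact/infix_catl/infix_cxyc_y.
Qed.

Lemma keep_head : head_ok Q.
Proof.
have [a1_pos _ _ _] := keep_pops_pos.
rewrite eQ /p /cxyc; case: e1 le_e1 => [|[|//]] _ /=; last by rewrite h1y h12.
by rewrite -(prednK a1_pos) /= hxy hx2.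
Qed.

Lemma keep_xrun : ~~ infix (nseq n.+2 x) Q.
Proof.
have [_ _ b1_pos b2_pos] := keep_pops_pos.
have -> : Q = (nseq e1 c1 ++ nseq a1 x) ++ y :: ((nseq b1.-1 y ++ nseq f1 c2 ++
    nseq e2 c1 ++ nseq a2 x) ++ y :: (nseq b2.-1 y ++ nseq f2 c2 ++ Q0)).
  by rewrite eQ /p /cxyc -(prednK b1_pos) -(prednK b2_pos) -!catA.
apply/negP => /(infix_nseq_cat_cons hyx) /orP [|/(infix_nseq_cat_cons hyx) /orP []].
- by apply/negP/count_lt_infix_nseq; count_letters; nat_lia.
- by apply/negP/count_lt_infix_nseq; count_letters; nat_lia.
move=> /(infix_nseq_ncons hyx) /(infix_nseq_ncons h2x) /consl_infix run.
by move/negP: xrun_Q'; apply; rewrite eQ' (infix_trans run) ?prefix_infix.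
Qed.

Lemma keep_yrun : ~~ infix (nseq n.+2 y) Q.
Proof.
have [a1_pos a2_pos _ _] := keep_pops_pos.
have -> : Q = nseq e1 c1 ++ x :: ((nseq a1.-1 x ++ nseq b1 y ++ nseq f1 c2 ++
    nseq e2 c1) ++ x :: (nseq a2.-1 x ++ nseq b2 y ++ nseq f2 c2 ++ Q0)).
  by rewrite eQ /p /cxyc -(prednK a1_pos) -(prednK a2_pos) -!catA.
have head_rest : is_true (if nseq f2 c2 ++ Q0 is b :: _ then b != y else true).
  case: f2 => [|f2'] /=; last exact: h2y.
  by move: head_Q'; rewrite eQ'; case: Q0 => [|q Q0'] //= /andP [].
apply/negP => /(infix_nseq_cat_cons hxy) /orP [|/(infix_nseq_cat_cons hxy) /orP []].
- by apply/negP/count_lt_infix_nseq; count_letters; nat_lia.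
- by apply/negP/count_lt_infix_nseq; count_letters; nat_lia.
move=> /(infix_nseq_ncons hxy) /(infix_nseq_cat head_rest) /orP [|].
  by apply/negP/count_lt_infix_nseq; count_letters; nat_lia.
move=> /(infix_nseq_ncons h2y) /consl_infix run.
by move/negP: yrun_Q'; apply; rewrite eQ' (infix_trans run) ?prefix_infix.
Qed.

End QueueNotEmptied.

Section QueueEmptied.
Variable s1 : seq T.
Hypotheses (s1_neq0 : s1 != [::]) (Q_neq0 : Q != [::]).
Hypotheses (ep : p = Q ++ s1) (es : s = s1 ++ Q').

Let count_p z : count_mem z Q + count_mem z s1 =
  count_mem z (cxyc e1 a1 b1 f1) + count_mem z (cxyc e2 a2 b2 f2).
Proof. by rewrite -!count_cat -ep. Qed.

Let count_s z : count_mem z s1 + count_mem z Q' =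
  count_mem z (cxyc (1 - e1) (n.+1 - a1) (n.+1 - b1) (1 - f1)) +
  count_mem z (cxyc (1 - e2) (n.+1 - a2) (n.+1 - b2) (1 - f2)).
Proof. by rewrite -!count_cat -es. Qed.

(* The factor c2 c1 in the middle of v v is not entirely pushed. *)
Lemma flush_sep : 0 < f1 + e2.
Proof.
rewrite lt0n addn_eq0; apply/negP => /andP [/eqP f1_0 /eqP e2_0].
move: (count_p c1) (count_s c1) (even_Q' c1); rewrite !count_c1_cxyc e2_0.
move: ep es; rewrite /p /s /cxyc; case: e1 le_e1 => [|[|//]] _ /= ep' es'.
- case: s1 es' s1_neq0 => [|z t] // [<- _] _ /=; rewrite eqxx; nat_lia.
- case: Q ep' Q_neq0 => [|q Q1] // [<- _] _ /=; rewrite eqxx => cp cs.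
  by have -> : count_mem c1 Q' = 1 by nat_lia.
Qed.

(* If the block starts by pushing c1 x^(n+1), the pushed letters popped again are
   [s1] = c1 x^a2 y^b2 c2^f2. *)
Lemma flush_first_pushed : e1 = 0 -> a1 = 0 ->
  nseq b2 y ++ nseq f2 c2 ++ Q' = nseq (n.+1 - a2) x ++ nseq (n.+1 - b1) y ++
    nseq (1 - f1) c2 ++ nseq (n.+1 - a2) x ++ nseq (n.+1 - b2) y ++ nseq (1 - f2) c2.
Proof.
move=> e1_0 a1_0.
have [t es1] : exists t, s1 = c1 :: t.
  move: es s1_neq0; rewrite /s /cxyc e1_0 /=.
  by case: s1 => [|z t] // [<- _] _; exists t.
have e2_1 : e2 = 1.
  by move: (count_p c1); rewrite !count_c1_cxyc es1 /= eqxx e1_0; nat_lia.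
have c1_Q : c1 \notin Q.
  by apply/count_memPn; move: (count_p c1); rewrite !count_c1_cxyc es1 /= eqxx; nat_lia.
have c1_pre : c1 \notin nseq b1 y ++ nseq f1 c2.
  by rewrite mem_cat !mem_nseq !letter_neqE !andbF.
have [_ et] : nseq b1 y ++ nseq f1 c2 = Q /\ nseq a2 x ++ nseq b2 y ++ nseq f2 c2 = t.
  apply: cat_cons_first c1_pre c1_Q _.
  by move: ep; rewrite es1 /p /cxyc e1_0 a1_0 e2_1 /= -!catA.
apply: (nseq_cat_cancel le_a2).
by move: es; rewrite es1 -et /s /cxyc e1_0 a1_0 e2_1 /= -!catA => -[].
Qed.

Lemma flush_first : e1 = 0 -> a1 = 0 -> b1 = 0 /\ f1 = 0.
Proof.
move=> e1_0 a1_0; have rest := flush_first_pushed e1_0 a1_0.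
have [lt_a2|eq_a2] : a2 < n.+1 \/ a2 = n.+1 by nat_lia.
  have [b2_0 f2_0] : b2 = 0 /\ f2 = 0.
    move: rest; rewrite -(subnSK lt_a2).
    by case: b2 => [|?]; case: f2 => [|?] //= [/eqP]; rewrite letter_neqE.
  have eQ' : Q' = nseq b2 y ++ nseq f2 c2 ++ Q' by rewrite b2_0 f2_0.
  move/negP: yrun_Q'; case; rewrite eQ' rest b2_0 subn0 !catA.
  by apply/infix_catr; exact: suffix_infix.
move: rest; rewrite eq_a2 subnn /= => rest.
have eQ' : Q' = [::].
  case: Q' head_Q' rest => [|q Q''] // /andP [qy qc2] rest.
  have : q \in nseq b2 y ++ nseq f2 c2 ++ q :: Q'' by rewrite !mem_cat inE eqxx !orbT.
  by rewrite rest !mem_cat !mem_nseq (negbTE qy) (negbTE qc2) !andbF.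
rewrite eQ' cats0 in rest.
have [f1_0 f2_1] : f1 = 0 /\ f2 = 1.
  by move/(congr1 (count_mem c2)): rest; count_letters; nat_lia.
move: rest; rewrite f1_0 f2_1 /= cats0 => /cat_cons_first.
rewrite !mem_nseq !letter_neqE !andbF => /(_ isT isT) [/(congr1 size)+ /(congr1 size)].
by rewrite !size_nseq /=; nat_lia.
Qed.

Lemma flush_head : head_ok Q.
Proof.
have -> : head_ok Q = head_ok p by rewrite ep; case: Q Q_neq0.
rewrite /p /cxyc; have [->|e1_0] : e1 = 1 \/ e1 = 0 by nat_lia.
  by rewrite /= h1y h12.
have [a1_0|a1_pos] := posnP a1; last by rewrite e1_0 -(prednK a1_pos) /= hxy hx2.
have [b1_0 f1_0] := flush_first e1_0 a1_0.
have e2_1 : e2 = 1 by move: flush_sep; rewrite f1_0; nat_lia.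
by rewrite e1_0 a1_0 b1_0 f1_0 e2_1 /= h1y h12.
Qed.

Lemma flush_run z : (z == x) || (z == y) -> ~~ infix (nseq n.+2 z) Q.
Proof.
move=> z_xy; have [u [c [w [ep' cz cnt_u cnt_w]]]] : exists u c w,
    [/\ p = u ++ c :: w, c != z, count_mem z u < n.+2 & count_mem z w < n.+2].
  have [f1_1|f1_0] : f1 = 1 \/ f1 = 0 by nat_lia.
  - exists (nseq e1 c1 ++ nseq a1 x ++ nseq b1 y), c2, (cxyc e2 a2 b2 f2).
    rewrite /p /cxyc f1_1 -!catA; split=> //;
      by case/orP: z_xy => /eqP ->; count_letters; nat_lia.
  - have e2_1 : e2 = 1 by move: flush_sep; rewrite f1_0; nat_lia.
    exists (nseq e1 c1 ++ nseq a1 x ++ nseq b1 y ++ nseq f1 c2), c1,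
      (nseq a2 x ++ nseq b2 y ++ nseq f2 c2).
    rewrite /p /cxyc e2_1 -!catA; split=> //;
      by case/orP: z_xy => /eqP ->; count_letters; nat_lia.
apply/negP => run; move: (infix_trans run (prefix_infix Q s1)); rewrite -ep ep'.
by move=> /(infix_nseq_cat_cons cz) /orP [] /infix_nseq_count; nat_lia.
Qed.

End QueueEmptied.

Lemma viable_of_block : Q ++ s = p ++ Q' -> (forall z, ~~ odd (count_mem z Q)) ->
  viable n.+1 Q.
Proof.
move=> eq even_Q; case/cat_eq_cat_cases: eq => [[Q0 [eQ eQ']]|[s1 [s1_neq0 ep es]]].
  by split; [exact: keep_head eQ eQ' | exact: keep_xrun eQ eQ' | exact: keep_yrun eQ eQ' |].
have [->|Q_neq0] := eqVneq Q [::]; first exact: viable_nil.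
split=> //; first exact: flush_head s1_neq0 Q_neq0 ep es.
  by apply: (flush_run s1_neq0 Q_neq0 ep es); rewrite eqxx.
by apply: (flush_run s1_neq0 Q_neq0 ep es); rewrite eqxx orbT.
Qed.

End BlockInvariant.

Lemma viable_block n p s Q Q' : shuffle (v n.+1 ++ v n.+1) p s ->
  Q ++ s = p ++ Q' -> viable n Q' -> viable n.+1 Q.
Proof.
move=> sh eq [head_Q' xrun_Q' yrun_Q' even_Q'].
have even_Q z : ~~ odd (count_mem z Q).
  by apply: shuffle_even_count sh eq _ (even_Q' z); rewrite count_cat addnn odd_double.
case/shuffle_cat: sh => [p1 [p2 [s1 [s2 [ep es sh1 sh2]]]]].
have [e1 [a1 [b1 [f1 [/and4P [le_e1 le_a1 le_b1 le_f1] ep1 es1]]]]] :=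
  shuffle_cxyc (e := 1) (a := n.+1) (b := n.+1) (f := 1) sh1.
have [e2 [a2 [b2 [f2 [/and4P [le_e2 le_a2 le_b2 le_f2] ep2 es2]]]]] :=
  shuffle_cxyc (e := 1) (a := n.+1) (b := n.+1) (f := 1) sh2.
subst p s p1 p2 s1 s2.
exact: (viable_of_block le_e1 le_a1 le_b1 le_f1 le_e2 le_a2 le_b2 le_f2
  head_Q' xrun_Q' yrun_Q' even_Q' eq even_Q).
Qed.

Lemma cxyc_suffix m u1 a u' : cxyc 1 m m 1 = u1 ++ a :: u' ->
  [\/ a = c1 /\ u' = cxyc 0 m m 1,
      exists2 k, k < m & a = x /\ u' = cxyc 0 k m 1,
      exists2 k, k < m & a = y /\ u' = cxyc 0 0 k 1 |
      a = c2 /\ u' = [::]].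
Proof.
rewrite /cxyc => /nseq_cat_eq_cat_cons [[i lt_i1 [-> ->]]|[u2 _]].
  by apply: Or41; rewrite (_ : i = 0) //; nat_lia.
case/nseq_cat_eq_cat_cons => [[k lt_km [-> ->]]|[u3 _]]; first by apply: Or42; exists k.
case/nseq_cat_eq_cat_cons => [[k lt_km [-> ->]]|[u4 _]]; first by apply: Or43; exists k.
by case: u4 => [|? []] // [-> ->]; apply: Or44.
Qed.

Section PopDeviation.
Variables (n : nat) (Q1 : seq T).
Hypotheses (head_Q1 : head_ok Q1) (xrun_Q1 : ~~ infix (nseq n.+1 x) Q1)
  (yrun_Q1 : ~~ infix (nseq n.+1 y) Q1).

Lemma dead_after_c1 : ~ reads (rcons (c1 :: cxyc 0 n.+1 n.+1 1) c1) (cxyc 0 n.+1 n.+1 1) Q1.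
Proof.
move=> /reads_pops_prefix [|p [s [Q0 [sh eQ eQ1]]]]; first by rewrite size_rcons.
case: p sh eQ => [|q p] sh eQ.
  move/negP: xrun_Q1; apply; rewrite eQ1 (shuffle_nil_pop sh).
  exact/infix_catl/infix_cxyc_x.
move: eQ (shuffle_count c1 sh) => [<- _]; rewrite count_c1_cxyc /= eqxx; nat_lia.
Qed.

Lemma dead_after_x k : k < n.+1 ->
  ~ reads (rcons (x :: cxyc 0 k n.+1 1) x) (cxyc 0 k n.+1 1) Q1.
Proof.
move=> lt_kn /reads_pops_prefix [|p [s [Q0 [sh eQ eQ1]]]]; first by rewrite size_rcons.
have [e [a1 [b1 [f1 [/and4P [le_e le_a1 _ _] ep _]]]]] := shuffle_cxyc sh.
have e0 : e = 0 by nat_lia.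
move: eQ; rewrite ep e0 /cxyc rcons_cons !rcons_cat -!catA => eQ.
move: (nseq_cat_cancel (u := nseq n.+1 y ++ [:: c2; x])
  (v := nseq b1 y ++ nseq f1 c2 ++ Q0) (leqW le_a1) eQ).
rewrite subSn // {ep eQ}.
case: b1 => [|?]; last by case=> /eqP; rewrite letter_neqE.
case: f1 => [|?]; last by case=> /eqP; rewrite letter_neqE.
move=> eQ0; move/negP: yrun_Q1; apply.
rewrite eQ1 -[Q0]/(nseq 0 y ++ nseq 0 c2 ++ Q0) eQ0.
exact/infix_catr/infix_infix.
Qed.

Lemma dead_after_y k : k < n.+1 ->
  ~ reads (rcons (y :: cxyc 0 0 k 1) y) (cxyc 0 0 k 1) Q1.
Proof.
move=> lt_kn /reads_pops_prefix [|p [s [Q0 [sh eQ eQ1]]]]; first by rewrite size_rcons.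
have [e [a1 [b1 [f1 [/and4P [le_e le_a1 le_b1 _] ep _]]]]] := shuffle_cxyc sh.
have [e0 a1_0] : e = 0 /\ a1 = 0 by nat_lia.
move: eQ; rewrite ep e0 a1_0 /cxyc rcons_cons !rcons_cat -!catA => eQ.
move: (nseq_cat_cancel (u := [:: c2; y]) (v := nseq f1 c2 ++ Q0) (leqW le_b1) eQ).
rewrite subSn // {ep eQ}; case: f1 => [|?]; last by case=> /eqP; rewrite letter_neqE.
by move: head_Q1; rewrite eQ1 => + /= eQ0; rewrite eQ0 /= eqxx.
Qed.

Lemma dead_after_c2 : ~ reads [:: c2; c2] [::] Q1.
Proof. by move: head_Q1 => + /= eQ1; rewrite eQ1 /= eqxx andbF. Qed.

End PopDeviation.

Lemma pop_deviation_dead n u1 a u' Q1 : v n.+1 = u1 ++ a :: u' ->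
  reads (rcons (a :: u') a) u' Q1 -> ~ viable n Q1.
Proof.
move=> /cxyc_suffix [[-> ->]|[k lt_k [-> ->]]|[k lt_k [-> ->]]|[-> ->]] r [hd xr yr _].
- exact: dead_after_c1 xr r.
- exact: (dead_after_x yr lt_k).
- exact: (dead_after_y hd lt_k).
- exact: dead_after_c2 hd r.
Qed.

Lemma forced_block n W chW : forced (eq^~ [::]) [::] W chW ->
  (forall Q, reads Q W [::] -> viable n Q) ->
  forced (eq^~ [::]) [::] (v n.+1 ++ v n.+1 ++ W)
    (nseq (size (v n.+1)) true ++ nseq (size (v n.+1)) false ++ chW).
Proof.
move=> forced_W viable_W.
apply: (forced_cat (w1 := v n.+1) (ch1 := nseq _ true)); last first.
  rewrite final_queue_push cat0s.
  apply: (forced_cat (w1 := v n.+1) (ch1 := nseq _ false)); last by rewrite final_queue_pop.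
  apply: (forced_weaken (K' := viable n)) => [Q' [Q'' r eQ'']|].
    by apply: viable_W; rewrite -eQ''.
  by apply: forced_pop => u1 a u' ev Q' r; apply: pop_deviation_dead ev r.
split=> // [Q1 Q' [//|//] | ].
apply: forced_push; last by exists [::].
by rewrite !mem_cat !mem_nseq !inE !letter_neqE !andbF.
Qed.

Lemma iota1S n : iota 1 n.+1 = iota 1 n ++ [:: n.+1].
Proof. by rewrite -[in LHS](addn1 n) iotaD add1n. Qed.

Lemma Vword_S n : Vword c1 c2 x y n.+1 = v n.+1 ++ v n.+1 ++ Vword c1 c2 x y n.
Proof. by rewrite /Vword iota1S rev_cat /= -catA. Qed.

Lemma intended_choices_S n : intended_choices c1 c2 x y n.+1 =
  nseq (size (v n.+1)) true ++ nseq (size (v n.+1)) false ++ intended_choices c1 c2 x y n.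
Proof. by rewrite /intended_choices iota1S rev_cat /= -catA. Qed.

Lemma reads_Vword_viable n Q : reads Q (Vword c1 c2 x y n) [::] -> viable n Q.
Proof.
elim: n Q => [|n IH] Q; first by move=> <-; exact: viable_nil.
rewrite Vword_S catA => /reads_cat [Q1 /reads_shuffle [p [s [sh e]]] /IH].
exact: viable_block sh e.
Qed.

Lemma forced_intended n :
  forced (eq^~ [::]) [::] (Vword c1 c2 x y n) (intended_choices c1 c2 x y n) /\
  final_queue [::] (Vword c1 c2 x y n) (intended_choices c1 c2 x y n) = [::].
Proof.
elim: n => [|n [forced_n final_n]] //; rewrite Vword_S intended_choices_S; split.
  by apply: forced_block forced_n _ => Q; apply: reads_Vword_viable.
by rewrite !final_queue_cat ?size_nseq // final_queue_push final_queue_pop.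
Qed.

End VWord.

Theorem theorem3 (T : eqType) (c1 c2 x y : T)
  (h12 : c1 != c2) (h1x : c1 != x) (h1y : c1 != y)
  (h2x : c2 != x) (h2y : c2 != y) (hxy : x != y)
  (l : nat) (hl : 1 <= l) :
  forall cs : seq (config T),
    accepting_computation (Vword c1 c2 x y l) cs <->
    cs = intended_computation c1 c2 x y l.
Proof.
move=> cs; have [forced_l final_l] := forced_intended h12 h1x h1y h2x h2y hxy l.
rewrite /accepting_computation /intended_computation; split.
  by case/andP=> p /eqP e; exact: forced_accepting_exec forced_l p e.
by move=> ->; have [-> ->] := forced_exec forced_l; rewrite final_l eqxx.
Qed.
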